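(* Let $n\ge 2$ and $v\in A_n$. Then $$\ell_{T(A_n)}(v)=\begin{cases} n-\mathrm{cyc}(v) & \text{if } 1,2 \text{ are in different cycles of } v,\\ n-\mathrm{cyc}(v)-1 & \text{if } 1,2 \text{ are in the same cycle of } v.\end{cases}$$
   Context: $A_n$ is the alternating group on $\{1,\dots,n\}$, $T(A_n)=\{(1\,2)(i\,j)\mid 1\le i<j\le n\}$, and $\ell_{T(A_n)}(v)=\min\{k\ge 0\mid v=t_1\cdots t_k,\ t_i\in T(A_n)\}$. $\mathrm{cyc}(v)$ is the number of cycles of $v$ in its disjoint cycle decomposition, fixed points counted. *)

From mathcomp Require Import all_boot all_fingroup all_solvable.
Set Implicit Arguments. Unset Strict Implicit. Unset Printing Implicit Defensive.
Local Open Scope group_scope.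

(* Points 1 and 2 of {1,...,n} are the ordinals 0 and 1 of 'I_n (needs 1 < n). *)
Definition pt1 (n : nat) (hn : (1 < n)%N) : 'I_n := Ordinal (ltnW hn).
Definition pt2 (n : nat) (hn : (1 < n)%N) : 'I_n := Ordinal hn.

Definition TA (n : nat) (hn : (1 < n)%N) : {set {perm 'I_n}} :=
  [set t : {perm 'I_n} | [exists i : 'I_n, exists j : 'I_n,
     ((i < j)%N) && (t == tperm (pt1 hn) (pt2 hn) * tperm i j)]].

Definition TA_prod (n : nat) (hn : (1 < n)%N) (v : {perm 'I_n}) (k : nat) : Prop :=
  exists s : seq {perm 'I_n},
    [/\ size s = k, all (fun t => t \in TA hn) s & v = \prod_(t <- s) t].

Definition TA_length_is (n : nat) (hn : (1 < n)%N) (v : {perm 'I_n}) (m : nat) : Prop :=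
  TA_prod hn v m /\ forall k, TA_prod hn v k -> (m <= k)%N.

(* number of cycles of v, fixed points included *)
Definition cyc (n : nat) (v : {perm 'I_n}) : nat := #|porbits v|.

(* Put s = (1 2).  Multiplying a permutation u by s splits the cycle through
   1 and 2 when they share a cycle and merges their cycles otherwise, so the
   claimed length L u satisfies  2 L u + cyc u + cyc (s u) = 2n - 1.  A
   generator s (x y) changes each of cyc u and cyc (s u) by at most one, hence
   L drops by at most one per generator: this is the lower bound.  Conversely,
   an even v <> 1 moves some c outside {1, 2}; with z = v^-1 c, the
   transposition (z c) splits a cycle of v and (s z, c) splits a cycle of s v,
   so the generator s (z c) lowers L by exactly one, and induction gives the
   upper bound. *)
From mathcomp Require Import all_boot all_fingroup all_solvable.
From mathcomp Require Import zify.
Set Implicit Arguments. Unset Strict Implicit. Unset Printing Implicit Defensive.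
Local Open Scope group_scope.

Section PermFacts.
Variable T : finType.
Implicit Types (u v : {perm T}) (a b x y : T).

Lemma porbit1 x : porbit (1 : {perm T}) x = [set x].
Proof. by rewrite porbit.unlock cycle1 imset_set1 /aperm perm1. Qed.

Lemma tperm_mulC a b x y :
  tperm a b * tperm x y = tperm (tperm a b x) (tperm a b y) * tperm a b.
Proof. by rewrite conjgCV tpermV tpermJ. Qed.

Lemma perm_fix_off_pair a b v : (forall c, c != a -> c != b -> v c = c) ->
  v = 1 \/ v = tperm a b.
Proof.
move=> fixv; have onab : perm_on [set a; b] v.
  apply/subsetP=> c; rewrite !inE; apply: contraR => /norP[ca cb].
  by rewrite fixv.
have vab x : x \in [set a; b] -> (v x == a) || (v x == b).
  by rewrite -(perm_closed _ onab) !inE.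
have /orP[/eqP va|/eqP va] := vab a (set21 _ _); [left|right]; apply/permP=> x.
- rewrite perm1; have [->//|xa] := eqVneq x a; have [->|xb] := eqVneq x b.
    have /orP[/eqP vb|/eqP //] := vab b (set22 _ _).
    have ab : a = b by apply: (@perm_inj _ v); rewrite va vb.
    by rewrite vb ab.
  exact: fixv.
- case: tpermP => [->//|->|/eqP xa /eqP xb]; last exact: fixv.
  have /orP[/eqP //|/eqP vb] := vab b (set22 _ _).
  have ab : a = b by apply: (@perm_inj _ v); rewrite va vb.
  by rewrite vb ab.
Qed.

End PermFacts.

Section Cycles.
Variable n : nat.
Implicit Types (u : {perm 'I_n}) (x y : 'I_n).

Lemma cyc1 : cyc (1 : {perm 'I_n}) = n.
Proof.
rewrite /cyc card_imset ?card_ord // => x y; rewrite !porbit1 => /setP/(_ x).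
by rewrite !inE eqxx => /esym/eqP.
Qed.

Lemma cyc_le u : cyc u <= n.
Proof. by rewrite -[n in _ <= n]card_ord leq_imset_card. Qed.

Lemma cyc_mul_tperm u x y :
  cyc (tperm x y * u) + (x \notin porbit u y).*2 = cyc u + (x != y).
Proof. exact: porbits_mul_tperm. Qed.

Lemma cyc_mul_tperm_ge u x y : cyc u <= cyc (tperm x y * u) + 1.
Proof.
have := cyc_mul_tperm u x y; have [->|_] := eqVneq x y.
  by rewrite porbit_id /= -mul2n; lia.
by case: (x \in porbit u y) => /=; rewrite -mul2n; lia.
Qed.

Lemma cyc_mul_tperm_split u x y : x != y -> x \in porbit u y ->
  cyc (tperm x y * u) = cyc u + 1.
Proof. by move=> xy xuy; have := cyc_mul_tperm u x y; rewrite xy xuy /=; lia. Qed.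

End Cycles.

Section TALength.
Variables (n : nat) (hn : 1 < n).
Local Notation a := (pt1 hn).
Local Notation b := (pt2 hn).
Local Notation s := (tperm a b).
Implicit Types (u v t : {perm 'I_n}) (x y : 'I_n).

Lemma pt1_neq_pt2 : a != b.
Proof. by rewrite -val_eqE. Qed.

Definition TA_length u := if b \in porbit u a then n - cyc u - 1 else n - cyc u.

Definition cyc_pair u := cyc u + cyc (s * u).

Lemma TA_length_cyc_pair u : 2 * TA_length u + cyc_pair u = 2 * n - 1.
Proof.
have := cyc_mul_tperm u a b; rewrite pt1_neq_pt2 porbit_sym -mul2n.
have := cyc_le u; have := cyc_le (s * u); rewrite /TA_length /cyc_pair.
by case: (b \in porbit u a) => /=; lia.
Qed.

Lemma TA_length1 : TA_length 1 = 0.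
Proof. by rewrite /TA_length porbit1 inE eq_sym (negbTE pt1_neq_pt2) cyc1 subnn. Qed.

Lemma TAP t : reflect (exists x y, x != y /\ t = s * tperm x y) (t \in TA hn).
Proof.
apply: (iffP idP).
  rewrite inE => /existsP[x /existsP[y /andP[xy /eqP ->]]].
  by exists x, y; split=> //; rewrite neq_ltn xy.
move=> [x [y [xy ->]]]; rewrite inE; apply/existsP.
have [lt|gt] : x < y \/ y < x by move: xy; rewrite neq_ltn => /orP.
  by exists x; apply/existsP; exists y; rewrite lt; apply/eqP.
by exists y; apply/existsP; exists x; rewrite gt (tpermC y); apply/eqP.
Qed.

Lemma TA_Alt t : t \in TA hn -> t \in Alt 'I_n.
Proof.
by case/TAP=> x [y [xy ->]]; rewrite Alt_even odd_permM !odd_tperm pt1_neq_pt2 xy.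
Qed.

Lemma TA_inv t : t \in TA hn -> t^-1 \in TA hn.
Proof.
case/TAP=> x [y [xy ->]]; apply/TAP; exists (s x), (s y).
by rewrite (inj_eq perm_inj) invMg !tpermV tperm_mulC !tpermK.
Qed.

Lemma cyc_pair_mul_tperm u x y : cyc_pair u <= cyc_pair (s * tperm x y * u) + 2.
Proof.
rewrite /cyc_pair.
have -> : s * (s * tperm x y * u) = tperm x y * u by rewrite !mulgA tperm2 mul1g.
have -> : s * tperm x y * u = tperm (s x) (s y) * (s * u).
  by rewrite tperm_mulC mulgA.
have := cyc_mul_tperm_ge u x y; have := cyc_mul_tperm_ge (s * u) (s x) (s y); lia.
Qed.

Lemma TA_length_mulTA t u : t \in TA hn -> TA_length (t * u) <= TA_length u + 1.
Proof.
case/TAP=> x [y [_ ->]]; have := cyc_pair_mul_tperm u x y.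
have := TA_length_cyc_pair u; have := TA_length_cyc_pair (s * tperm x y * u).
(* [lia] must see [TA_length] and [cyc_pair] only as atoms *)
by move: (TA_length _) (TA_length _) (cyc_pair _) (cyc_pair _); lia.
Qed.

Lemma TA_length_le v k : TA_prod hn v k -> TA_length v <= k.
Proof.
case=> l [<- lTA ->] {v}; elim: l lTA => [|t l IH] /=.
  by rewrite big_nil TA_length1.
case/andP=> /(TA_length_mulTA (\prod_(t <- l) t)) mulTA /IH lenl.
by rewrite big_cons (leq_trans mulTA) // addn1 ltnS.
Qed.

Lemma Alt_moves_off_pair v : v \in Alt 'I_n -> v != 1 ->
  exists c, [/\ c != a, c != b & v c != c].
Proof.
move=> vAlt v1.
have [c /and3P[ca cb vc]|fixv] := pickP [pred c | [&& c != a, c != b & v c != c]].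
  by exists c.
have [v1E|vsE] : v = 1 \/ v = s.
  apply: perm_fix_off_pair => c ca cb; apply/eqP.
  by move: (fixv c) => /=; rewrite ca cb => /negbFE.
  by rewrite v1E eqxx in v1.
by move: vAlt; rewrite vsE Alt_even odd_tperm pt1_neq_pt2.
Qed.

Lemma TA_length_descent v : v \in Alt 'I_n -> v != 1 ->
  exists2 t, t \in TA hn & TA_length (t * v) + 1 = TA_length v.
Proof.
move=> vAlt v1; have [c [ca cb vc]] := Alt_moves_off_pair vAlt v1.
pose z := v^-1 c; have vz : v z = c by rewrite permKV.
have zc : z != c by apply: contraNneq vc => zE; rewrite -{1}zE vz.
have sc : s c = c by rewrite tpermD // eq_sym.
exists (s * tperm z c); first by apply/TAP; exists z, c.
have split_v : cyc (tperm z c * v) = cyc v + 1.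
  apply: cyc_mul_tperm_split zc _.
  by have := mem_porbit v 1 z; rewrite expg1 vz porbit_sym.
have split_sv : cyc (tperm (s z) c * (s * v)) = cyc (s * v) + 1.
  apply: cyc_mul_tperm_split; first by rewrite -sc (inj_eq perm_inj).
  by have := mem_porbit (s * v) 1 (s z); rewrite expg1 permM tpermK vz porbit_sym.
have cyc_pair_tv : cyc_pair (s * tperm z c * v) = cyc_pair v + 2.
  rewrite /cyc_pair !mulgA tperm2 mul1g tperm_mulC sc -mulgA split_v split_sv.
  by rewrite addnACA [cyc (s * v) + _]addnC.
have := TA_length_cyc_pair v; have := TA_length_cyc_pair (s * tperm z c * v).
by rewrite cyc_pair_tv; move: (TA_length _) (TA_length _) (cyc_pair _); lia.
Qed.

Lemma TA_prod_TA_length v : v \in Alt 'I_n -> TA_prod hn v (TA_length v).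
Proof.
move eqk: (TA_length v) => k; elim: k v eqk => [|k IH] v eqk vAlt.
  have [->|v1] := eqVneq v 1; first by exists [::]; rewrite big_nil.
  by have [t _] := TA_length_descent vAlt v1; rewrite eqk addn1.
have [v1E|v1] := eqVneq v 1; first by rewrite v1E TA_length1 in eqk.
have [t tTA] := TA_length_descent vAlt v1; rewrite eqk addn1 => -[/IH].
case/(_ (groupM (TA_Alt tTA) vAlt)) => l [sz lTA prodE].
by exists (t^-1 :: l); rewrite /= sz TA_inv // lTA big_cons -prodE mulKg.
Qed.

End TALength.

Theorem corollary6p4 (n : nat) (hn : (1 < n)%N) (v : {perm 'I_n})
  (hv : v \in Alt 'I_n) :
  TA_length_is hn v
    (if pt2 hn \in porbit v (pt1 hn) then n - cyc v - 1 else n - cyc v)%N.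
Proof. by split; [exact: TA_prod_TA_length | exact: TA_length_le]. Qed.
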